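(* Let $\mathcal{M}=\langle \mathcal{S},\mathcal{A},\mathcal{P},\mathcal{R},\gamma\rangle$ be a deterministic finite MDP with next-state function $\mathscr{N}$, and let $d_{\sim}$ be the unique function $\mathcal{S}\times\mathcal{S}\to\mathbb{R}$ satisfying $d_{\sim}(s,t)=\max_{a\in\mathcal{A}}\left(|\mathcal{R}(s,a)-\mathcal{R}(t,a)|+\gamma\,d_{\sim}(\mathscr{N}(s,a),\mathscr{N}(t,a))\right)$ for all $s,t$. Let $\mathcal{D}$ be a probability distribution on the set $\mathcal{T}=\mathcal{S}\times\mathcal{S}\times\mathcal{A}$ of transition pairs $\tau_{s,t,a}$ (the pair of transitions $\langle s,a,\mathcal{R}(s,a),\mathscr{N}(s,a)\rangle$, $\langle t,a,\mathcal{R}(t,a),\mathscr{N}(t,a)\rangle$) with $\mathcal{D}(\tau)>0$ for all $\tau\in\mathcal{T}$, and let $\tau_{s_1,t_1,a_1},\tau_{s_2,t_2,a_2},\dots$ be independent samples from $\mathcal{D}$. Let $d_0\equiv 0$ and for $n\ge1$ define $d_n(s,t)=d_{n-1}(s,t)$ for all $(s,t)\neq(s_n,t_n)$ and $$d_n(s_n,t_n)=\max\left(d_{n-1}(s_n,t_n),\ |\mathcal{R}(s_n,a_n)-\mathcal{R}(t_n,a_n)|+\gamma\,d_{n-1}(\mathscr{N}(s_n,a_n),\mathscr{N}(t_n,a_n))\right).$$ Then $\lim_{n\to\infty}d_n=d_{\sim}$ almost surely.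
   Context: A finite MDP has finite state set $\mathcal{S}$, finite action set $\mathcal{A}$, transition kernel $\mathcal{P}$, reward $\mathcal{R}:\mathcal{S}\times\mathcal{A}\to\mathbb{R}$ bounded by $R_{max}$, and discount $\gamma\in[0,1)$. It is deterministic if for every $s,a$ there is a unique $\mathscr{N}(s,a)\in\mathcal{S}$ with $\mathcal{P}(s,a)(\mathscr{N}(s,a))=1$. In this deterministic setting $d_\sim$ coincides with the bisimulation metric of Ferns et al., the unique fixed point of $d\mapsto\max_a(|\mathcal{R}(s,a)-\mathcal{R}(t,a)|+\gamma\mathcal{W}_1(d)(\mathcal{P}(s,a),\mathcal{P}(t,a)))$. *)

From HB Require Import structures.
From mathcomp Require Import all_boot all_order all_algebra.
From mathcomp Require Import all_classical all_reals all_analysis.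
Set Implicit Arguments. Unset Strict Implicit. Unset Printing Implicit Defensive.
Import Order.TTheory GRing.Theory Num.Theory.
Local Open Scope ring_scope.

(* One application of the bisimulation operator (max over actions;
   default 0 for an empty action set). *)
Definition bisim_op {R : realType} {S A : finType} (rew : S -> A -> R)
  (nxt : S -> A -> S) (gam : R) (d : S -> S -> R) (s t : S) : R :=
  \big[Num.max/0]_(a : A) (`|rew s a - rew t a| + gam * d (nxt s a) (nxt t a)).

Definition is_bisim_metric {R : realType} {S A : finType} (rew : S -> A -> R)
  (nxt : S -> A -> S) (gam : R) (d : S -> S -> R) : Prop :=
  forall s t, d s t = bisim_op rew nxt gam d s t.

(* The sampled update sequence: d_0 = 0; step n+1 uses sample x n
   (x 0, x 1, ... are the samples tau_1, tau_2, ...). *)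
Fixpoint d_seq {R : realType} {S A : finType} (rew : S -> A -> R)
  (nxt : S -> A -> S) (gam : R) (x : nat -> (S * S * A)%type) (n : nat)
  : S -> S -> R :=
  match n with
  | 0 => fun _ _ => 0
  | n'.+1 =>
      let d := d_seq rew nxt gam x n' in
      let: (sn, tn, an) := x n' in
      fun s t =>
        if (s == sn) && (t == tn) then
          Num.max (d sn tn)
            (`|rew sn an - rew tn an| + gam * d (nxt sn an) (nxt tn an))
        else d s t
  end.

(* X is an i.i.d. sequence with law D: every event {X n = v} is measurable
   and, for every finite set of distinct indices, the joint law factorises
   as a product of D's (mutual independence + identical distribution D). *)
Definition iid_with_law {R : realType} {dm : measure_display}
  {Omega : measurableType dm} (P : probability Omega R) {T : finType}
  (D : T -> R) (X : nat -> Omega -> T) : Prop :=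
  (forall n v, measurable [set w | X n w = v]) /\
  (forall (I : seq nat) (v : nat -> T), uniq I ->
     P (\bigcap_(i in [set` I]) [set w | X i w = v i])%classic
       = (\prod_(i <- I) D (v i))%:E).

From HB Require Import structures.
From mathcomp Require Import all_boot all_order all_algebra.
From mathcomp Require Import all_classical all_reals all_analysis.
From mathcomp Require Import ring.
Set Implicit Arguments.
Unset Strict Implicit.
Unset Printing Implicit Defensive.
Import Order.TTheory GRing.Theory Num.Theory numFieldNormedType.Exports.
Local Open Scope ring_scope.
Local Open Scope classical_set_scope.

(* The sampled iterates d_n are nondecreasing and, since the bisimulation
   operator F is monotone with fixed point d_sim, stay below d_sim.  If every
   transition pair is sampled infinitely often, then for each k the iterates
   eventually dominate F^k 0, because one more round of samples of all pairs
   performs a full application of F.  As F is a gamma-contraction,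
   d_sim - F^k 0 <= gamma^k max d_sim, whence d_n --> d_sim.  Finally, every
   pair is almost surely sampled infinitely often: by independence, avoiding
   tau at K given times has probability (1 - D tau)^K. *)

Section BisimOperator.
Variables (R : realType) (S A : finType) (rew : S -> A -> R) (nxt : S -> A -> S)
  (gam : R).
Hypothesis gam_ge0 : 0 <= gam.

Local Notation op := (bisim_op rew nxt gam).

Lemma bisim_op_ge0 d s t : 0 <= op d s t.
Proof. exact: bigmax_ge_id. Qed.

Lemma bisim_op_ge_action d s t a :
  `|rew s a - rew t a| + gam * d (nxt s a) (nxt t a) <= op d s t.
Proof. exact: le_bigmax. Qed.

Lemma bisim_op_le_shift d e c : 0 <= c -> (forall s t, d s t <= e s t + c) ->
  forall s t, op d s t <= op e s t + gam * c.
Proof.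
move=> c_ge0 de s t; apply: bigmax_le => [|a _].
  by rewrite addr_ge0 ?bisim_op_ge0 ?mulr_ge0.
apply: le_trans (lerD (bisim_op_ge_action e s t a) (lexx _)).
by rewrite -addrA lerD2l -mulrDr ler_wpM2l.
Qed.

Definition bisim_iter k : S -> S -> R := iter k op (fun _ _ => 0).

Lemma bisim_fixpoint_le_iter dsim M : is_bisim_metric rew nxt gam dsim ->
  0 <= M -> (forall s t, dsim s t <= M) ->
  forall k s t, dsim s t <= bisim_iter k s t + gam ^+ k * M.
Proof.
move=> fix_dsim M_ge0 dsim_le; elim=> [|k IHk] s t /=.
  by rewrite expr0 mul1r add0r.
rewrite fix_dsim exprS -mulrA.
by apply: bisim_op_le_shift => //; rewrite mulr_ge0 ?exprn_ge0.
Qed.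

End BisimOperator.

Section SampledIteration.
Variables (R : realType) (S A : finType) (rew : S -> A -> R) (nxt : S -> A -> S)
  (gam : R).
Hypotheses (gam_ge0 : 0 <= gam) (gam_lt1 : gam < 1).
Variable x : nat -> (S * S * A)%type.

Local Notation d := (d_seq rew nxt gam x).

Lemma d_seq_nondecreasing s t : nondecreasing_seq (fun n => d n s t).
Proof.
apply/nondecreasing_seqP => n /=; case: (x n) => [[sn tn] an].
by case: ifP => // /andP[/eqP -> /eqP ->]; rewrite le_max lexx.
Qed.

Lemma d_seq_ge0 n s t : 0 <= d n s t.
Proof. exact: (d_seq_nondecreasing s t (leq0n n)). Qed.

Lemma d_seq_sampled m s t a : x m = (s, t, a) ->
  `|rew s a - rew t a| + gam * d m (nxt s a) (nxt t a) <= d m.+1 s t.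
Proof. by move=> /= ->; rewrite !eqxx /= le_max lexx orbT. Qed.

Lemma d_seq_le_fixpoint dsim : is_bisim_metric rew nxt gam dsim ->
  forall n s t, d n s t <= dsim s t.
Proof.
move=> fix_dsim; elim=> [|n IHn] s t /=; first by rewrite fix_dsim bisim_op_ge0.
case: (x n) => [[sn tn] an].
case: ifP => [/andP[/eqP -> /eqP ->]|_]; last exact: IHn.
rewrite ge_max IHn /= fix_dsim.
apply: le_trans (bisim_op_ge_action rew nxt gam dsim _ _ an).
by rewrite lerD2l ler_wpM2l.
Qed.

Hypothesis x_recurrent : forall tau N, exists2 m, (N <= m)%N & x m = tau.

Lemma samples_all_within N :
  exists N', forall tau, exists2 m, (N <= m < N')%N & x m = tau.
Proof.
have [f N_le_f x_f] := fin_all_exists2 (x_recurrent ^~ N).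
exists (\max_tau f tau).+1 => tau; exists (f tau) => //.
by rewrite N_le_f ltnS leq_bigmax.
Qed.

Lemma d_seq_ge_iter k : exists N, forall n, (N <= n)%N ->
  forall s t, bisim_iter rew nxt gam k s t <= d n s t.
Proof.
elim: k => [|k [N IHk]]; first by exists 0%N => n _ s t; exact: d_seq_ge0.
have [N' sampled] := samples_all_within N.
exists N' => n N'_le_n s t /=.
apply: bigmax_le => [|a _]; first exact: d_seq_ge0.
have [m /andP[N_le_m m_lt_N'] x_m] := sampled (s, t, a).
apply: le_trans (d_seq_nondecreasing s t (leq_trans m_lt_N' N'_le_n)).
apply: le_trans (d_seq_sampled x_m).
by rewrite lerD2l ler_wpM2l // IHk.
Qed.

Lemma d_seq_cvg dsim : is_bisim_metric rew nxt gam dsim ->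
  forall s t, d n s t @[n --> \oo] --> dsim s t.
Proof.
move=> fix_dsim s t.
pose M := \big[Num.max/1]_(p : S * S) dsim p.1 p.2.
have M_gt0 : 0 < M by apply: lt_le_trans (bigmax_ge_id _ _ _ _).
have dsim_le_M s' t' : dsim s' t' <= M.
  exact: (le_bigmax 1 (fun p : S * S => dsim p.1 p.2) (s', t')).
apply/cvgrPdist_le => eps eps_gt0.
have gam_norm_lt1 : `|gam| < 1 by rewrite ger0_norm.
have /cvgrPdist_le/(_ (eps / M) (divr_gt0 eps_gt0 M_gt0)) [k _ gam_small] :=
  cvg_expr gam_norm_lt1.
have := gam_small k (leqnn k); rewrite /= sub0r normrN ger0_norm ?exprn_ge0 //.
rewrite ler_pdivlMr // => gamkM_le_eps.
have [N iter_le_d] := d_seq_ge_iter k.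
exists N => // n /= N_le_n.
rewrite ger0_norm ?subr_ge0 ?(d_seq_le_fixpoint fix_dsim) // lerBlDl.
have := bisim_fixpoint_le_iter gam_ge0 fix_dsim (ltW M_gt0) dsim_le_M k s t.
move/le_trans; apply.
by rewrite lerD ?iter_le_d.
Qed.

End SampledIteration.

Lemma le_geometric_le0 (R : realType) (r q : R) :
  0 <= q -> q < 1 -> (forall K, r <= q ^+ K) -> r <= 0.
Proof.
move=> q_ge0 q_lt1 r_le; have q_norm_lt1 : `|q| < 1 by rewrite ger0_norm.
rewrite -(cvg_lim _ (cvg_expr q_norm_lt1)) //.
apply: limr_ge; first exact: cvgP (cvg_expr q_norm_lt1).
exact: nearW.
Qed.

Section Recurrence.
Variables (R : realType) (dm : measure_display) (Omega : measurableType dm)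
  (P : probability Omega R) (T : finType) (D : T -> R) (X : nat -> Omega -> T).
Hypothesis X_iid : iid_with_law P D X.

Definition match_avoid (I : seq nat) (v : nat -> T) (tau : T) (J : seq nat) :
    set Omega :=
  (\bigcap_(i in [set` I]) [set w | X i w = v i]) `&`
  (\bigcap_(j in [set` J]) ~` [set w | X j w = tau]).

Definition avoids_from (tau : T) (N : nat) : set Omega :=
  \bigcap_(m in [set m | (N <= m)%N]) ~` [set w | X m w = tau].

Lemma measurable_avoids_from tau N : measurable (avoids_from tau N).
Proof. by apply: bigcap_measurableType => m _; exact/measurableC/X_iid.1. Qed.

Lemma measurable_match_avoid I v tau J : measurable (match_avoid I v tau J).
Proof.
apply: measurableI; apply: bigcap_measurableType => k _; first exact: X_iid.1.
exact/measurableC/X_iid.1.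
Qed.

Lemma match_avoid_cons_avoid I v tau j J :
  match_avoid I v tau (j :: J) =
  match_avoid I v tau J `\` [set w | X j w = tau].
Proof.
apply/seteqP; split => w /=.
  move=> [match_I avoid]; split; first split=> // k k_J.
    by apply: avoid; rewrite /= inE k_J orbT.
  by apply: avoid; rewrite /= inE eqxx.
move=> [[match_I avoid_J] Xj_ne]; split=> // k /=.
by rewrite inE => /orP[/eqP ->|]; [|apply: avoid_J].
Qed.

Lemma match_avoid_cons_match I v tau j J : j \notin I ->
  match_avoid (j :: I) (fun i => if i == j then tau else v i) tau J =
  match_avoid I v tau J `&` [set w | X j w = tau].
Proof.
move=> j_notin_I; apply/seteqP; split => w /=.
  move=> [match_jI avoid]; split; last first.
    by have := match_jI j; rewrite /= inE !eqxx; apply.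
  split=> // i i_I; have := match_jI i; rewrite /= inE i_I orbT.
  by case: eqP i_I j_notin_I => [-> ->|_ _ _]; last apply.
move=> [[match_I avoid] Xj]; split=> // i /=; rewrite inE.
by case: eqP => [-> //|_ /= i_I]; apply: match_I.
Qed.

Lemma prob_match_avoid I v tau J : uniq (I ++ J) ->
  P (match_avoid I v tau J) =
  (\prod_(i <- I) D (v i) * (1 - D tau) ^+ size J)%:E.
Proof.
(* Avoiding tau at j is the event minus its refinement that matches tau at j. *)
elim: J I v => [|j J IHJ] I v.
  rewrite cats0 expr0 mulr1 => uniq_I; rewrite -(X_iid.2 I v uniq_I).
  by congr (P _); apply/seteqP; split=> [w []|w match_I] //; split=> /=.
move=> uniq_IjJ.
have perm_jI : perm_eq (I ++ j :: J) ((j :: I) ++ J).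
  by have /permPl := perm_catCA I [:: j] J.
have uniq_jIJ : uniq ((j :: I) ++ J) by rewrite -(perm_uniq perm_jI).
have /andP[j_notin_IJ uniq_IJ] := uniq_jIJ.
have j_notin_I : j \notin I by apply: contra j_notin_IJ; rewrite mem_cat => ->.
have m_AJ := measurable_match_avoid I v tau J.
have P_setD (B : set Omega) : measurable B ->
    P (match_avoid I v tau J `\` B) =
    (P (match_avoid I v tau J) - P (match_avoid I v tau J `&` B))%E.
  by move=> mB; rewrite measureD ?ltey_eq ?fin_num_measure.
rewrite match_avoid_cons_avoid P_setD; last exact: X_iid.1.
rewrite -(match_avoid_cons_match v tau J j_notin_I) !IHJ // big_cons eqxx.
have -> : \prod_(i <- I) D (if i == j then tau else v i) =
          \prod_(i <- I) D (v i).
  rewrite big_seq [RHS]big_seq; apply: eq_bigr => i i_I.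
  by case: eqP i_I j_notin_I => // -> ->.
by rewrite -EFinB exprS; congr (_%:E); ring.
Qed.

Lemma prob_avoids_from tau N : 0 < D tau -> P (avoids_from tau N) = 0%E.
Proof.
move=> D_gt0; have mE := measurable_avoids_from tau N.
have q_ge0 : 0 <= 1 - D tau.
  have := @prob_match_avoid [::] (fun _ => tau) tau [:: 0%N] isT.
  by rewrite big_nil mul1r expr1 => PE; rewrite -lee_fin -PE measure_ge0.
have q_lt1 : 1 - D tau < 1 by rewrite ltrBlDr ltrDl.
have PE_le K : (P (avoids_from tau N) <= ((1 - D tau) ^+ K)%:E)%E.
  have := @prob_match_avoid [::] (fun _ => tau) tau (iota N K).
  rewrite /= iota_uniq big_nil mul1r size_iota => /(_ isT) <-.
  apply: le_measure; rewrite ?inE; [exact: mE|exact: measurable_match_avoid|].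
  move=> w avoid_w; split=> // k /=.
  by rewrite mem_iota => /andP[N_le_k _]; apply: avoid_w.
have PE_fin : P (avoids_from tau N) \is a fin_num by rewrite fin_num_measure.
apply/eqP; rewrite eq_le measure_ge0 andbT -(fineK PE_fin) lee_fin.
by apply: (le_geometric_le0 q_ge0 q_lt1) => K; rewrite -lee_fin fineK.
Qed.

Lemma ae_recurrent : (forall tau, 0 < D tau) ->
  {ae P, forall w, forall tau N, exists2 m, (N <= m)%N & X m w = tau}.
Proof.
move=> D_gt0; apply: filter_forall => tau; apply: ae_foralln => N.
exists (avoids_from tau N); split.
- exact: measurable_avoids_from.
- exact: prob_avoids_from.
- by move=> w /= not_recurrent m N_le_m X_m; apply: not_recurrent; exists m.
Qed.

End Recurrence.

Theorem theorem4 (R : realType) (S A : finType)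
  (rew : S -> A -> R) (nxt : S -> A -> S) (gam : R)
  (hgam0 : 0 <= gam) (hgam1 : gam < 1)
  (dsim : S -> S -> R) (hdsim : is_bisim_metric rew nxt gam dsim)
  (D : (S * S * A)%type -> R) (hDpos : forall tau, 0 < D tau)
  (hDsum : \sum_(tau : (S * S * A)%type) D tau = 1)
  (dm : measure_display) (Omega : measurableType dm) (P : probability Omega R)
  (X : nat -> Omega -> (S * S * A)%type) (hX : iid_with_law P D X) :
  {ae P, forall w, forall s t : S,
     (d_seq rew nxt gam (fun k => X k w) n s t) @[n --> \oo] --> dsim s t}.
Proof.
apply: filterS (ae_recurrent hX hDpos) => w recurrent.
exact (d_seq_cvg hgam0 hgam1 recurrent hdsim).
Qed.
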